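(* Let $A \in \mathbb{R}^{m \times n}$ and $b \in \mathbb{R}^m$, and suppose that $\mathcal{P} = \{x \in \mathbb{R}^n : Ax \geq b\}$ is a polytope (i.e., bounded) and that we are in the nondegenerate setting (distinct feasible bases have distinct basic points). Let $G = (V,E)$ be a finite undirected graph whose vertices are subsets of $[m]$. Suppose that all of the following hold: (i) $G$ is nonempty; (ii) every $I \in V$ is a feasible basis; (iii) for every $I \in V$ and every $J \in N_G(I)$, $\#(I \cap J) = n-1$; (iv) for every $I \in V$, $\# N_G(I) = n$. Then $G = G_\mathrm{bases}$.
   Context: $[m] = \{1,\dots,m\}$. For $I \subset [m]$, $A_I$ and $b_I$ denote the submatrix of $A$ (resp. subvector of $b$) formed by the rows indexed by $I$. A basis is a subset $I \subset [m]$ with $\#I = n$ such that $A_I$ is nonsingular; its basic point is the unique solution $x^I$ of $A_I x = b_I$. The basis is feasible if $x^I \in \mathcal{P}$. Two feasible bases $I, I'$ are adjacent if $\#(I \cap I') = n-1$. $G_\mathrm{bases}$ is the graph whose vertices are the feasible bases of $\mathcal{P}$ and whose edges join adjacent feasible bases. $N_G(I)$ is the set of neighbors of $I$ in $G$. The nondegenerate setting means that the map $I \mapsto x^I$ from feasible bases to points is injective. *)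

From mathcomp Require Import all_boot all_order all_algebra.
Set Implicit Arguments. Unset Strict Implicit. Unset Printing Implicit Defensive.
Import Order.TTheory GRing.Theory Num.Theory.
Local Open Scope ring_scope.

Section Polyhedra.
Variables (R : realFieldType) (m n : nat) (A : 'M[R]_(m, n)) (b : 'cV[R]_m).

Definition in_poly (x : 'cV[R]_n) : Prop := forall i : 'I_m, b i 0 <= (A *m x) i 0.

Definition poly_bounded : Prop :=
  exists M : R, forall x : 'cV[R]_n, in_poly x -> forall j : 'I_n, `|x j 0| <= M.

Definition subrows (I : {set 'I_m}) : 'M[R]_(#|I|, n) :=
  rowsub (fun k : 'I_#|I| => enum_val k) A.

Definition is_basis (I : {set 'I_m}) : bool :=
  (#|I| == n) && (\rank (subrows I) == n).

Definition solves (I : {set 'I_m}) (x : 'cV[R]_n) : Prop :=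
  forall i : 'I_m, i \in I -> (A *m x) i 0 = b i 0.

Definition feasible_basis (I : {set 'I_m}) : Prop :=
  is_basis I /\ exists x : 'cV[R]_n, solves I x /\ in_poly x.

Definition nondegenerate_setting : Prop :=
  forall I J : {set 'I_m}, feasible_basis I -> feasible_basis J ->
  forall x : 'cV[R]_n, solves I x -> solves J x -> I = J.

(* adjacency of bases: #(I cap J) = n - 1 (integer arithmetic, written as + 1) *)
Definition adjacent (I J : {set 'I_m}) : bool := (#|I :&: J| + 1 == n)%N.

End Polyhedra.

Definition simple_graph_on (m : nat) (V : {set {set 'I_m}}) (E : rel {set 'I_m}) : Prop :=
  (forall I J, E I J = E J I) /\ (forall I, ~~ E I I) /\
  (forall I J, E I J -> (I \in V) && (J \in V)).

Definition nbhd (m : nat) (V : {set {set 'I_m}}) (E : rel {set 'I_m}) (I : {set 'I_m})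
  : {set {set 'I_m}} := [set J in V | E I J].

From mathcomp Require Import all_boot all_order all_algebra.
From mathcomp Require Import lra.
From Stdlib Require Import ClassicalEpsilon.
Set Implicit Arguments. Unset Strict Implicit. Unset Printing Implicit Defensive.
Import Order.TTheory GRing.Theory Num.Theory.
Local Open Scope ring_scope.

(* Write x^I for the basic point of a feasible basis I. In the nondegenerate
   setting, a feasible basis J with I \ J = {i} is reached from x^I by a
   positive step along the edge direction of the rows I \ {i}, and there is at
   most one such J: of two steps along the same direction, the shorter one would
   make the longer one tight on a whole basis. The n neighbours of I in G have
   distinct pivots i in I, so every i in I is the pivot of a neighbour in G.
   Hence every basis adjacent to a vertex of G is a neighbour of it in G.
   Moreover G contains every feasible basis K. Minimise c = sum_(k in K) A_k
   over the basic points of the vertices of G. At a minimiser I, c is a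
   nonnegative combination of the rows of A_I: otherwise pivoting out a row
   with a negative coefficient would decrease c. So x^I minimises c over P,
   and c x^I <= c x^K = sum_(k in K) b_k makes x^I tight on K. By
   nondegeneracy, I = K. *)

Lemma mulmx_entryB (R : pzRingType) (p q r : nat) (M : 'M[R]_(p, q))
    (x y : 'M[R]_(q, r)) i j :
  (M *m (x - y)) i j = (M *m x) i j - (M *m y) i j.
Proof. by rewrite mulmxBr !mxE. Qed.

Lemma mulmx_entryZ (R : comPzRingType) (p q r : nat) (M : 'M[R]_(p, q)) (a : R)
    (x : 'M[R]_(q, r)) i j :
  (M *m (a *: x)) i j = a * (M *m x) i j.
Proof. by rewrite -scalemxAr !mxE. Qed.

Lemma setD_eq_set1 (T : finType) (I J : {set T}) (i : T) :
  I :\: J = [set i] -> [/\ i \in I, i \notin J & {subset I :\ i <= J}].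
Proof.
move=> IJ; have : i \in I :\: J by rewrite IJ set11.
rewrite inE => /andP[iJ iI]; split=> // k; rewrite inE => /andP[ki kI].
apply: contraR ki => kJ; have : k \in I :\: J by rewrite inE kJ.
by rewrite IJ inE.
Qed.

Lemma setD_card1 (T : finType) (I J : {set T}) :
  #|I :&: J|.+1 = #|I| -> exists i, I :\: J = [set i].
Proof. by move=> IJ; apply/cards1P; rewrite cardsD -IJ subSnn. Qed.

Section Bases.
Variables (R : realFieldType) (m n : nat) (A : 'M[R]_(m, n)).

Lemma basis_row_comb (I : {set 'I_m}) (c : 'rV[R]_n) : is_basis A I ->
  exists lam : 'I_#|I| -> R,
    forall x : 'cV[R]_n, (c *m x) 0 0 = \sum_k lam k * (A *m x) (enum_val k) 0.
Proof.
case/andP => _ rankI.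
have /submxP[D ->] := submx_full c (rankI : row_full (subrows A I)).
exists (fun k => D 0 k) => x; rewrite -mulmxA mxE.
by apply: eq_bigr => k _; rewrite mul_rowsub_mx mxE.
Qed.

Lemma basis_mulmx_eq0 (I : {set 'I_m}) (y : 'cV[R]_n) : is_basis A I ->
  (forall k, k \in I -> (A *m y) k 0 = 0) -> y = 0.
Proof.
move=> basisI Iy0; apply/matrixP => j z; rewrite (ord1 z) mxE.
have [lam lamE] := basis_row_comb (delta_mx 0 j) basisI.
move: (lamE y); rewrite -rowE mxE => ->.
by rewrite big1 // => k _; rewrite Iy0 ?mulr0 ?enum_valP.
Qed.

Definition row_sum (K : {set 'I_m}) : 'rV[R]_n := \row_j \sum_(k in K) A k j.

Lemma row_sum_mulmx (K : {set 'I_m}) (x : 'cV[R]_n) :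
  (row_sum K *m x) 0 0 = \sum_(k in K) (A *m x) k 0.
Proof.
rewrite mxE; under eq_bigr do rewrite mxE mulr_suml.
by rewrite exchange_big; apply: eq_bigr => k _; rewrite mxE.
Qed.

Variable b : 'cV[R]_m.

Definition basic_point (I : {set 'I_m}) : 'cV[R]_n :=
  epsilon (inhabits 0) (fun x => solves A b I x /\ in_poly A b x).

Lemma basic_pointP I : feasible_basis A b I ->
  solves A b I (basic_point I) /\ in_poly A b (basic_point I).
Proof. by case=> _ ex; apply: (epsilon_spec (inhabits 0) _ ex). Qed.

Lemma feasible_basis_card I : feasible_basis A b I -> #|I| = n.
Proof. by case=> /andP[/eqP]. Qed.

Lemma row_sum_tight (K : {set 'I_m}) (x : 'cV[R]_n) : in_poly A b x ->
  (row_sum K *m x) 0 0 <= \sum_(k in K) b k 0 -> solves A b K x.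
Proof.
move=> Px; rewrite row_sum_mulmx -subr_le0 -sumrB => slack_le0 k kK.
have slack_ge0 k' : k' \in K -> 0 <= (A *m x) k' 0 - b k' 0 by rewrite subr_ge0.
have slack0 : \sum_(k in K) ((A *m x) k 0 - b k 0) = 0.
  by apply/le_anti; rewrite slack_le0 sumr_ge0.
by apply/eqP; rewrite -subr_eq0 (psumr_eq0P slack_ge0 slack0).
Qed.

Lemma nonneg_comb_optimal (I : {set 'I_m}) (c : 'rV[R]_n) (lam : 'I_#|I| -> R)
    (x y : 'cV[R]_n) :
  (forall z : 'cV[R]_n, (c *m z) 0 0 = \sum_k lam k * (A *m z) (enum_val k) 0) ->
  (forall k, 0 <= lam k) -> solves A b I x -> in_poly A b y ->
  (c *m x) 0 0 <= (c *m y) 0 0.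
Proof.
move=> c_lam lam_ge0 Ix Py; rewrite !c_lam; apply: ler_sum => k _.
by rewrite ler_wpM2l // Ix ?enum_valP.
Qed.

(* x1 = x0 + (t1 / t2) (x2 - x0) lies strictly inside the segment [x0, x2] of P,
   so a row tight at x1 is constant along that segment. *)
Lemma segment_tight (x0 x1 x2 : 'cV[R]_n) (t1 t2 : R) k :
  in_poly A b x0 -> in_poly A b x2 -> 0 < t1 -> t1 < t2 ->
  t2 *: (x1 - x0) = t1 *: (x2 - x0) -> (A *m x1) k 0 = b k 0 ->
  (A *m (x2 - x0)) k 0 = 0.
Proof.
move=> P0 P2 t1_gt0 t12 x1E x1k.
have := congr1 (fun y => (A *m y) k 0) x1E.
rewrite /= !mulmx_entryZ !mulmx_entryB x1k.
move: (P0 k) (P2 k); move: ((A *m x0) k 0) ((A *m x2) k 0) (b k 0) => u v w.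
nra.
Qed.

Hypothesis nondeg : nondegenerate_setting A b.

Lemma pivot_step (I J : {set 'I_m}) (i : 'I_m) :
  feasible_basis A b I -> feasible_basis A b J -> I :\: J = [set i] ->
  (forall k, k \in I :\ i -> (A *m (basic_point J - basic_point I)) k 0 = 0) /\
  0 < (A *m (basic_point J - basic_point I)) i 0.
Proof.
move=> fI fJ IJ; set d := basic_point J - basic_point I.
have [sI _] := basic_pointP fI; have [sJ PJ] := basic_pointP fJ.
have [iI iJ IiJ] := setD_eq_set1 IJ.
have d_ker k : k \in I :\ i -> (A *m d) k 0 = 0.
  move=> kIi; have /setD1P[_ kI] := kIi.
  by rewrite mulmx_entryB sJ ?sI ?subrr // IiJ.
have d_neq0 : d != 0.
  apply/eqP => /eqP; rewrite subr_eq0 => /eqP xJI.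
  have IJeq : I = J by apply: (nondeg fI fJ sI); rewrite -xJI.
  by move: iJ; rewrite -IJeq iI.
have d_ge0 : 0 <= (A *m d) i 0 by rewrite mulmx_entryB sI // subr_ge0 PJ.
split=> //; rewrite lt_def d_ge0 andbT.
apply: contra d_neq0 => /eqP di0; apply/eqP/(basis_mulmx_eq0 (proj1 fI)) => k kI.
by have [->|ki] := eqVneq k i; [|apply: d_ker; apply/setD1P].
Qed.

Lemma pivot_uniq (I J1 J2 : {set 'I_m}) (i : 'I_m) :
  feasible_basis A b I -> feasible_basis A b J1 -> feasible_basis A b J2 ->
  I :\: J1 = [set i] -> I :\: J2 = [set i] -> J1 = J2.
Proof.
pose t J := (A *m (basic_point J - basic_point I)) i 0.
wlog t12 : J1 J2 / t J1 <= t J2.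
  move=> wlog_t12 fI f1 f2 e1 e2; have [le12|lt21] := leP (t J1) (t J2).
    exact: wlog_t12.
  by apply/esym/wlog_t12 => //; apply: ltW.
move=> fI f1 f2 e1 e2.
have [ker1 t1_gt0] := pivot_step fI f1 e1; have [ker2 t2_gt0] := pivot_step fI f2 e2.
have [s1 _] := basic_pointP f1; have [s2 P2] := basic_pointP f2.
have [_ PI] := basic_pointP fI.
have steps : t J2 *: (basic_point J1 - basic_point I) =
             t J1 *: (basic_point J2 - basic_point I).
  apply/eqP; rewrite -subr_eq0; apply/eqP/(basis_mulmx_eq0 (proj1 fI)) => k kI.
  rewrite mulmx_entryB !mulmx_entryZ.
  have [->|ki] := eqVneq k i; first by rewrite mulrC subrr.
  by rewrite ker1 ?ker2 ?mulr0 ?subrr //; apply/setD1P.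
move: t12; rewrite le_eqVlt => /orP[/eqP t12|t12].
  move: steps; rewrite t12 => /(scalerI (lt0r_neq0 t2_gt0))/addIr x12.
  by apply: (nondeg f1 f2 s1); rewrite x12.
suff d2_eq0 : basic_point J2 - basic_point I = 0.
  by move: t2_gt0; rewrite /t d2_eq0 mulmx0 mxE ltxx.
apply: (basis_mulmx_eq0 (proj1 f1)) => k kJ1.
exact: segment_tight PI P2 t1_gt0 t12 steps (s1 k kJ1).
Qed.

Section Graph.
Variables (V : {set {set 'I_m}}) (E : rel {set 'I_m}).
Hypothesis V_feasible : forall I, I \in V -> feasible_basis A b I.
Hypothesis nbhd_adjacent :
  forall I J, I \in V -> J \in nbhd V E I -> (#|I :&: J| + 1 = n)%N.
Hypothesis card_nbhd : forall I, I \in V -> #|nbhd V E I| = n.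

Lemma nbhd_pivot I J : I \in V -> J \in nbhd V E I -> exists i, I :\: J = [set i].
Proof.
move=> IV JN; apply: setD_card1.
by rewrite (feasible_basis_card (V_feasible IV)) -(nbhd_adjacent IV JN) addn1.
Qed.

Lemma nbhd_pivot_exists I i : I \in V -> i \in I ->
  exists2 J, J \in nbhd V E I & I :\: J = [set i].
Proof.
move=> IV iI; have fI := V_feasible IV.
pose D := [set I :\: J | J in nbhd V E I].
have D_sub : D \subset [set [set k] | k in I].
  apply/subsetP => _ /imsetP[J JN ->]; have [k IJ] := nbhd_pivot IV JN.
  by have [kI _ _] := setD_eq_set1 IJ; rewrite IJ imset_f.
have D_card : #|D| = n.
  rewrite card_in_imset ?card_nbhd // => J1 J2 J1N J2N /= IJ12.
  have [k IJ1] := nbhd_pivot IV J1N.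
  move: J1N J2N; rewrite !inE => /andP[J1V _] /andP[J2V _].
  by apply: (pivot_uniq fI (V_feasible J1V) (V_feasible J2V) IJ1); rewrite -IJ12.
have /eqP D_pivots : D == [set [set k] | k in I].
  by rewrite eqEcard D_sub D_card (card_imset _ set1_inj) (feasible_basis_card fI) /=.
have := imset_f (fun k => [set k]) iI; rewrite -D_pivots => /imsetP[J JN IJ].
by exists J.
Qed.

Lemma graph_min_optimal I (c : 'rV[R]_n) : I \in V ->
  (forall J, J \in V -> (c *m basic_point I) 0 0 <= (c *m basic_point J) 0 0) ->
  forall y, in_poly A b y -> (c *m basic_point I) 0 0 <= (c *m y) 0 0.
Proof.
move=> IV I_min y Py; have fI := V_feasible IV.
have [lam c_lam] := basis_row_comb c (proj1 fI).
apply: (nonneg_comb_optimal c_lam) (basic_pointP fI).1 Py => k.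
rewrite leNgt; apply/negP => lam_lt0.
have [J JN IJ] := nbhd_pivot_exists IV (enum_valP k).
move: JN; rewrite inE => /andP[JV _].
have [d_ker d_gt0] := pivot_step fI (V_feasible JV) IJ.
have : (c *m (basic_point J - basic_point I)) 0 0 < 0.
  rewrite c_lam (bigD1 k) //= big1 ?addr0 ?nmulr_rlt0 // => k' k'k.
  rewrite d_ker ?mulr0 // !inE enum_valP andbT.
  by apply: contra k'k => /eqP/enum_val_inj ->.
by rewrite mulmx_entryB subr_lt0 ltNge I_min.
Qed.

Lemma graph_complete K : V != set0 -> feasible_basis A b K -> K \in V.
Proof.
case/set0Pn => I0 I0V fK.
pose c := row_sum K.
have [I IV I_min] := arg_minP (fun J => (c *m basic_point J) 0 0) I0V.
have [sI PI] := basic_pointP (V_feasible IV); have [sK PK] := basic_pointP fK.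
have tightK : solves A b K (basic_point I).
  apply: row_sum_tight PI (le_trans (graph_min_optimal IV I_min PK) _).
  by rewrite row_sum_mulmx (eq_bigr _ sK).
by rewrite -(nondeg (V_feasible IV) fK sI tightK).
Qed.

Lemma adjacent_nbhd_edge I J : I \in V -> feasible_basis A b J -> adjacent n I J -> E I J.
Proof.
move=> IV fJ /eqP IJ_adj; have fI := V_feasible IV.
have [i IJ] : exists i, I :\: J = [set i].
  by apply: setD_card1; rewrite (feasible_basis_card fI) -IJ_adj addn1.
have [iI _ _] := setD_eq_set1 IJ.
have [J' + IJ'] := nbhd_pivot_exists IV iI; rewrite inE => /andP[J'V EIJ'].
by rewrite (pivot_uniq fI fJ (V_feasible J'V) IJ IJ').
Qed.

End Graph.
End Bases.

Theorem theorem3p5 (R : realFieldType) (m n : nat) (A : 'M[R]_(m, n)) (b : 'cV[R]_m)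
  (V : {set {set 'I_m}}) (E : rel {set 'I_m}) :
  poly_bounded A b ->
  nondegenerate_setting A b ->
  simple_graph_on V E ->
  V != set0 ->
  (forall I, I \in V -> feasible_basis A b I) ->
  (forall I J, I \in V -> J \in nbhd V E I -> (#|I :&: J| + 1 = n)%N) ->
  (forall I, I \in V -> #|nbhd V E I| = n) ->
  (forall I, I \in V <-> feasible_basis A b I) /\
  (forall I J, E I J <-> feasible_basis A b I /\ feasible_basis A b J /\ adjacent n I J).
Proof.
move=> _ nondeg [_ [_ E_V]] V_neq0 V_feasible nbhd_adj card_nbhd.
have complete K (fK : feasible_basis A b K) : K \in V :=
  graph_complete nondeg V_feasible nbhd_adj card_nbhd V_neq0 fK.
split=> [K | I J]; first by split; [apply: V_feasible | apply: complete].
split=> [EIJ | [fI [fJ IJ_adj]]].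
  have /andP[IV JV] := E_V I J EIJ.
  split; [exact: V_feasible | split; [exact: V_feasible |]].
  by apply/eqP/nbhd_adj; rewrite // inE JV EIJ.
exact: (adjacent_nbhd_edge nondeg V_feasible nbhd_adj card_nbhd (complete I fI) fJ IJ_adj).
Qed.
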